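(* Let $M/K$ be obtained by strong cluster magnification from a subextension $L/K$ through the finite Galois extension $F/K$, and assume $t_K(L)\ne1$. Then: (1) a field $F'$ is the unique subfield of $M$ Galois over $K$ of maximum degree if and only if $F'=F_1F$, where $F_1$ is the unique subfield of $L$ Galois over $K$ of maximum degree; (2) for fields $F_1,\dots,F_k\subseteq L$, the chain $K\subsetneq F_1\subsetneq\cdots\subsetneq F_k$ is the unique ascending chain for $L/K$ if and only if $K\subsetneq F_1F\subsetneq\cdots\subsetneq F_kF$ is the unique ascending chain for $M/K$.
   Context: $K$ is a perfect field with a fixed algebraic closure $\bar K$; all extensions finite inside $\bar K$; $\tilde L$ is the Galois closure of $L/K$. Strong cluster magnification: $M/K$ is obtained by strong cluster magnification from $L/K$ ($K\subseteq L\subseteq M$) through $F/K$ if $[L:K]>2$, $F/K$ is finite Galois, $\tilde L$ and $F$ are linearly disjoint over $K$, and $LF=M$. For a base field $E$ and finite $P/E$, the ascending index $t_E(P)=[F_P:E]$ where $F_P$ is the unique subfield of $P$ Galois over $E$ of maximum degree. The unique ascending chain of $P/E$ is $E=F_0\subsetneq F_1\subsetneq\cdots\subsetneq F_k$ where each $F_i$ is the unique subfield of $P$ Galois over $F_{i-1}$ of maximum degree, stopping at the first $F_k$ with $t_{F_k}(P)=1$. *)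

From HB Require Import structures.
From mathcomp Require Import all_boot all_order all_algebra all_fingroup all_field.
Set Implicit Arguments. Unset Strict Implicit. Unset Printing Implicit Defensive.
Import GRing.Theory.
Local Open Scope ring_scope.

Definition perfect_field (K : fieldType) : Prop :=
  forall p, p \in [pchar K] -> forall x : K, exists y : K, y ^+ p = x.

Section Defs.
Variables (K : fieldType) (Om : splittingFieldType K).
Implicit Types E P X F L : {subfield Om}.

Definition is_galois_closure E L (Lt : {subfield Om}) : Prop :=
  [/\ (L <= Lt)%VS, galois E Lt &
      forall Y : {subfield Om}, (L <= Y)%VS -> galois E Y -> (Lt <= Y)%VS].

Definition lin_disjoint E (A B : {subfield Om}) : Prop :=
  [/\ (E <= A)%VS, (E <= B)%VS &
      \dim_E (A * B)%AS = (\dim_E A * \dim_E B)%N].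

Definition is_max_galois_sub E P X : Prop :=
  [/\ (X <= P)%VS, galois E X &
      forall Y : {subfield Om}, (Y <= P)%VS -> galois E Y ->
        (\dim_E Y <= \dim_E X)%N].

Definition ascending_index E P (n : nat) : Prop :=
  exists X, is_max_galois_sub E P X /\ \dim_E X = n.

(* strong cluster magnification: M/K from L/K through F/K, with K = 1%AS *)
Definition strong_cluster_magnification (L F M : {subfield Om}) : Prop :=
  [/\ (2 < \dim_(1%AS : {subfield Om}) L)%N,
      galois 1%AS F,
      (exists Lt, is_galois_closure 1%AS L Lt /\ lin_disjoint 1%AS Lt F) &
      (L * F)%AS = M].

(* E = F_0 ⊊ F_1 ⊊ ... ⊊ F_k (s = [F_1; ...; F_k]) is the ascending chain of P/E *)
Definition ascending_chain E P (s : seq {subfield Om}) : Prop :=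
  (forall i, (i < size s)%N ->
     is_max_galois_sub (nth E (E :: s) i) P (nth E s i) /\
     nth E (E :: s) i != nth E s i) /\
  is_max_galois_sub (last E s) P (last E s).

End Defs.

From HB Require Import structures.
From mathcomp Require Import all_boot all_order all_algebra all_fingroup all_field.
From mathcomp Require Import zify.
From Stdlib Require Import Classical.
Set Implicit Arguments. Unset Strict Implicit. Unset Printing Implicit Defensive.
Import GRing.Theory.
Local Open Scope ring_scope.

(* Let E := Lt F, where Lt is the Galois closure of L.  Linear disjointness
   makes Gal(E/K) the internal direct product of P := Gal(E/Lt) and
   Q := Gal(E/F); hence for Z <= Lt we get Gal(E/ZF) = Gal(E/Z) :&: Q and
   Gal(E/Z) = Gal(E/ZF) P, so Z |-> ZF is injective below Lt.
   Now let B <= L, B <= C <= BF, and let X be the largest Galois subextension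
   of L/B.  Then XF is Galois over C, and every Galois subextension Y of LF/C
   lies in AF, where A is the fixed field of (Gal(E/Y) :&: Q) P: the field A
   lies in L and is Galois over B because Gal(E/B) = Gal(E/BF) P normalises
   its group.  So A <= X and Y <= XF, i.e. XF is the largest Galois
   subextension of LF/C.  Taking C = K for the first link of the ascending
   chain and C = F_(i-1) F for the later ones gives both parts; t_K(L) <> 1
   rules out the empty chain and makes K <> F_1 equivalent to K <> F_1 F. *)

Section MaxGaloisSub.
Variables (K : fieldType) (Om : splittingFieldType K).
Implicit Types B C P X Y : {subfield Om}.

Lemma galois_refl B : galois B B.
Proof.
rewrite /galois subvv separable_refl; apply/forall_inP => f.
rewrite inE kAutfE => /kAHomP idBf.
suff -> : (f @: B)%VS = (\1 @: B)%VS by rewrite lim1g.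
by apply: eq_in_limg => x /idBf ->; rewrite lfunE.
Qed.

Lemma gal_self B : 'Gal(B / B)%g = 1%g.
Proof.
apply: card_le1_trivg; rewrite -galois_dim ?galois_refl //.
by rewrite divnn adim_gt0.
Qed.

Lemma galois_prodv C0 C X Y : (C0 <= C)%VS ->
  galois C X -> galois C0 Y -> galois C (X * Y)%AS.
Proof.
move=> sC0C /and3P[sCX sepCX nCX] /and3P[_ sepC0Y nC0Y].
have sepCY := separableSl sC0C sepC0Y.
have nCY := normalFieldS sC0C nC0Y.
apply/and3P; split; first exact: subv_trans sCX (field_subvMr X Y).
  apply: (separable_trans sepCX).
  have sXY_adj : ((X * Y)%AS <= <<X & vbasis Y>>%AS)%VS.
    apply: prodv_sub; first exact: subv_adjoin_seq.
    rewrite -{1}(span_basis (vbasisP Y)); apply/span_subvP.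
    exact: seqv_sub_adjoin.
  apply: (separableSr sXY_adj); apply: separable_Fadjoin_seq.
  apply/allP => y /vbasis_mem Yy; apply: (separable_elementS sCX).
  exact: (separableP sepCY).
apply/forall_inP => f Cf; rewrite aimgM.
by rewrite (eqP (forall_inP nCX f Cf)) (eqP (forall_inP nCY f Cf)).
Qed.

Lemma max_galois_sub_contains C P X Y : is_max_galois_sub C P X ->
  (Y <= P)%VS -> galois C Y -> (Y <= X)%VS.
Proof.
move=> [sXP gCX maxX] sYP gCY.
have gCXY : galois C (X * Y)%AS by apply: galois_prodv gCX gCY.
have sCX : (C <= X)%VS by case/and3P: gCX.
have sXXY := field_subvMr X Y.
suff -> : X = (X * Y)%AS :> {vspace Om} by apply: field_subvMl.
apply/eqP; rewrite eqEdim sXXY (dim_sup_field sCX).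
rewrite (dim_sup_field (subv_trans sCX sXXY)) leq_mul2r.
by rewrite maxX ?orbT // prodv_sub.
Qed.

Lemma max_galois_sub_uniq C P X X' : is_max_galois_sub C P X ->
  is_max_galois_sub C P X' -> X = X'.
Proof.
move=> maxX maxX'; have [sXP gX _] := maxX; have [sX'P gX' _] := maxX'.
apply: val_inj; apply: subv_anti.
by rewrite (max_galois_sub_contains maxX sX'P gX')
  (max_galois_sub_contains maxX' sXP gX).
Qed.

Lemma max_galois_sub_exists B P : (B <= P)%VS ->
  exists X, is_max_galois_sub B P X.
Proof.
move=> sBP.
have dimP Y : (Y <= P)%VS -> (\dim_B Y <= \dim P)%N.
  by move=> sYP; apply: leq_trans (leq_div _ _) (dimvS sYP).
suff ex_max : forall n Y, (Y <= P)%VS -> galois B Y ->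
    (\dim P - \dim_B Y <= n)%N -> exists X, is_max_galois_sub B P X.
  exact: (ex_max _ B sBP (galois_refl B) (leqnn _)).
have grow Y : (Y <= P)%VS -> galois B Y -> is_max_galois_sub B P Y \/
    exists Y', [/\ (Y' <= P)%VS, galois B Y' & \dim_B Y < \dim_B Y']%N.
  move=> sYP gBY; case: (classic (exists Y', [/\ (Y' <= P)%VS, galois B Y'
    & \dim_B Y < \dim_B Y']%N)) => [|noY']; [by right | left].
  split=> // Y' sY'P gBY'; rewrite leqNgt; apply/negP => ltYY'.
  by apply: noY'; exists Y'.
elim=> [|n IHn] Y sYP gBY le_n;
  have [maxY | [Y' [sY'P gBY' ltYY']]] := grow Y sYP gBY; try by exists Y.
- by have := dimP _ sY'P; lia.
- by apply: (IHn Y') => //; have := dimP _ sY'P; lia.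
Qed.

End MaxGaloisSub.

Section GaloisCorrespondence.
Variables (K : fieldType) (Om : splittingFieldType K) (E : {subfield Om}).
Hypothesis galE : galois 1%AS E.
Implicit Types C Z : {subfield Om}.

Lemma galois_subfield Z : (Z <= E)%VS -> galois Z E.
Proof. by move=> sZE; apply: galoisS galE; rewrite sub1v. Qed.

Lemma fixedField_gal Z : (Z <= E)%VS -> fixedField 'Gal(E / Z)%g = Z.
Proof. by move/galois_subfield/galois_fixedField. Qed.

Lemma gal_subvE Z1 Z2 : (Z1 <= E)%VS -> (Z2 <= E)%VS ->
  (Z1 <= Z2)%VS = ('Gal(E / Z2) \subset 'Gal(E / Z1))%g.
Proof. by move=> sZ1E sZ2E; rewrite galois_connection // fixedField_gal. Qed.

Lemma gal_prodv Z1 Z2 : (Z1 <= E)%VS -> (Z2 <= E)%VS ->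
  'Gal(E / (Z1 * Z2)%AS)%g = ('Gal(E / Z1) :&: 'Gal(E / Z2))%g.
Proof.
move=> sZ1E sZ2E; have sZE : ((Z1 * Z2)%AS <= E)%VS by apply: prodv_sub.
apply/setP => x; rewrite inE -!sub1set !galois_connection //.
apply/idP/andP => [sZ | [sZ1 sZ2]]; last exact: prodv_sub.
by split; apply: subv_trans sZ; [apply: field_subvMr | apply: field_subvMl].
Qed.

Lemma galois_gal_normal C Z : (C <= Z)%VS -> (Z <= E)%VS ->
  galois C Z = ('Gal(E / Z) <| 'Gal(E / C))%g.
Proof.
move=> sCZ sZE; have galCE := galois_subfield (subv_trans sCZ sZE).
apply/idP/idP => [/and3P[_ _ nCZ] | nZ].
  by apply: normalField_normal nCZ; rewrite ?sCZ.
by rewrite -(fixedField_gal sZE); apply: normal_fixedField_galois.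
Qed.

End GaloisCorrespondence.

Definition ascending_step (K : fieldType) (Om : splittingFieldType K)
    (E P : {subfield Om}) (s : seq {subfield Om}) (i : nat) : Prop :=
  is_max_galois_sub (nth E (E :: s) i) P (nth E s i) /\
  nth E (E :: s) i != nth E s i.

Section StrongMagnification.
Variables (K : fieldType) (Om : splittingFieldType K) (Lt F : {subfield Om}).
Hypotheses (galLt : galois 1%AS Lt) (galF : galois 1%AS F).
Hypothesis dim_LtF : \dim (Lt * F)%AS = (\dim Lt * \dim F)%N.

Let E := (Lt * F)%AS.
Let galE : galois 1%AS E := galois_prodv (subvv _) galLt galF.
Let sLtE : (Lt <= E)%VS := field_subvMr Lt F.
Let sFE : (F <= E)%VS := field_subvMl Lt F.

Implicit Types B C X Y Z : {subfield Om}.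

Local Notation G := 'Gal(E / 1%AS)%G.
Local Notation P := 'Gal(E / Lt)%G.
Local Notation Q := 'Gal(E / F)%G.

Lemma galLt_normal : (P <| G)%g.
Proof. by rewrite -galois_gal_normal ?sub1v. Qed.

Lemma galF_normal : (Q <| G)%g.
Proof. by rewrite -galois_gal_normal ?sub1v. Qed.

Lemma galLtF_TI : (P :&: Q)%g = 1%g.
Proof. by rewrite -gal_prodv // gal_self. Qed.

Lemma galF_mulLt : (Q * P)%g = G.
Proof.
apply/eqP; rewrite eqEcard mulG_subG !normal_sub ?galLt_normal ?galF_normal //=.
have capQP : (Q :&: P)%g = 1%g by rewrite setIC galLtF_TI.
rewrite TI_cardMg //.
rewrite -(galois_dim galE) -(galois_dim (galois_subfield galE sLtE)).
rewrite -(galois_dim (galois_subfield galE sFE)) /E dim_LtF dimv1 divn1.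
by rewrite mulnK ?adim_gt0 // mulKn ?adim_gt0 // mulnC.
Qed.

Lemma gal_prodvF_mulLt Z : (Z <= Lt)%VS ->
  ('Gal(E / (Z * F)%AS) * P)%g = 'Gal(E / Z)%g.
Proof.
move=> sZLt; rewrite gal_prodv ?(subv_trans sZLt) // group_modr ?galS //.
by rewrite galF_mulLt; apply/setIidPl/galS/sub1v.
Qed.

Lemma gal_mulLt_capF (N : {group gal_of E}) : (N \subset Q)%g ->
  (N * P :&: Q)%g = N.
Proof. by move=> sNQ; rewrite -group_modl // galLtF_TI mulg1. Qed.

Lemma prodvF_inj X1 X2 : (X1 <= Lt)%VS -> (X2 <= Lt)%VS ->
  (X1 * F)%AS = (X2 * F)%AS -> X1 = X2.
Proof.
move=> sX1Lt sX2Lt eqX12; apply: val_inj; apply: subv_anti.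
have sX1E := subv_trans sX1Lt sLtE; have sX2E := subv_trans sX2Lt sLtE.
rewrite (gal_subvE galE sX1E sX2E) (gal_subvE galE sX2E sX1E).
by rewrite -(gal_prodvF_mulLt sX1Lt) -(gal_prodvF_mulLt sX2Lt) eqX12 subxx.
Qed.

Variable L : {subfield Om}.
Hypothesis sLLt : (L <= Lt)%VS.

Let sLE : (L <= E)%VS := subv_trans sLLt sLtE.
Let sLFE : ((L * F)%AS <= E)%VS := prodvSl F sLLt.

Lemma galois_sub_prodvF_descent B C Y : (B <= L)%VS -> (B <= C)%VS ->
  (C <= B * F)%VS -> (Y <= L * F)%VS -> galois C Y ->
  exists A : {subfield Om}, [/\ (A <= L)%VS, galois B A & (Y <= A * F)%VS].
Proof.
move=> sBL sBC sCBF sYLF gCY.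
have sBLt := subv_trans sBL sLLt; have sBE := subv_trans sBLt sLtE.
have sYE := subv_trans sYLF sLFE; have sCY : (C <= Y)%VS by case/and3P: gCY.
pose N := ('Gal(E / Y) :&: Q)%G.
have sNQ : (N \subset Q)%g := subsetIr _ _.
have nPN : (N \subset 'N(P))%g.
  apply: subset_trans (normal_norm galLt_normal).
  exact: subset_trans sNQ (normal_sub galF_normal).
pose A := fixedField_aspace (N <*> P)%G.
have sAE : (A <= E)%VS := fixedField_bound _.
have galA : 'Gal(E / A)%g = (N * P)%g.
  by rewrite gal_fixedField; apply: norm_joinEl.
have sNPB : (N * P \subset 'Gal(E / B))%g.
  apply: mul_subG; last exact: galS.
  exact: subset_trans (subsetIl _ Q) (galS E (subv_trans sBC sCY)).
have sBA : (B <= A)%VS by rewrite (gal_subvE galE sBE sAE) galA.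
exists A; split.
- rewrite (gal_subvE galE sAE sLE) galA -(gal_prodvF_mulLt sLLt) mulSg //.
  by rewrite subsetI (galS E (field_subvMl L F)) andbT -(gal_subvE galE).
- rewrite (galois_gal_normal galE sBA sAE) galA /normal sNPB /=.
  rewrite -(gal_prodvF_mulLt sBLt) mul_subG //; last first.
    by rewrite -norm_joinEl // normsG // joing_subr.
  have nCG H : (H <| G)%g -> ('Gal(E / C) \subset 'N(H))%g.
    by move=> nHG; apply: subset_trans (normal_norm nHG); apply/galS/sub1v.
  have /andP[_ nYC] : ('Gal(E / Y) <| 'Gal(E / C))%g.
    by rewrite -galois_gal_normal.
  apply: subset_trans (galS E sCBF) _.
  apply: normsM; last exact: nCG galLt_normal.
  by apply: normsI; last exact: nCG galF_normal.
- rewrite (gal_subvE galE sYE (prodv_sub sAE sFE)) gal_prodv // galA.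
  by rewrite gal_mulLt_capF // subsetIl.
Qed.

Lemma max_galois_sub_prodvF B C X : (B <= L)%VS -> (B <= C)%VS ->
  (C <= B * F)%VS -> (X <= L)%VS ->
  is_max_galois_sub B L X <-> is_max_galois_sub C (L * F)%AS (X * F)%AS.
Proof.
move=> sBL sBC sCBF sXL.
have mag X' : is_max_galois_sub B L X' ->
    is_max_galois_sub C (L * F)%AS (X' * F)%AS.
  move=> maxX'; have [sX'L gBX' _] := maxX'.
  have sCX'F : (C <= X' * F)%VS.
    by apply: subv_trans sCBF (prodvSl F _); case/and3P: gBX'.
  split; first exact: prodvSl.
    by apply: galoisS (galois_prodv (sub1v B) gBX' galF); rewrite sBC sCX'F.
  move=> Y sYLF gCY.
  have [A [sAL gBA sYAF]] := galois_sub_prodvF_descent sBL sBC sCBF sYLF gCY.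
  apply/leq_div2r/dimvS/(subv_trans sYAF)/prodvSl.
  exact: max_galois_sub_contains maxX' sAL gBA.
split; first exact: mag.
move=> maxXF; have [X0 maxX0] := max_galois_sub_exists sBL.
have [sX0L _ _] := maxX0.
have eqXF := max_galois_sub_uniq maxXF (mag _ maxX0).
by rewrite (prodvF_inj (subv_trans sXL sLLt) (subv_trans sX0L sLLt) eqXF).
Qed.

Lemma max_galois_sub1_prodvF F1 : is_max_galois_sub 1%AS L F1 ->
  forall F', is_max_galois_sub 1%AS (L * F)%AS F' <-> F' = (F1 * F)%AS.
Proof.
move=> maxF1 F'; have [sF1L _ _] := maxF1.
have maxF1F :=
  (max_galois_sub_prodvF (sub1v L) (subvv _) (sub1v _) sF1L).1 maxF1.
by split=> [maxF' | ->] //; apply: max_galois_sub_uniq maxF' maxF1F.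
Qed.

Lemma prodvF_eq1 X : (X * F)%AS = 1%AS -> X = 1%AS.
Proof.
move=> XF1; apply: val_inj; apply: subv_anti; rewrite sub1v andbT.
have := field_subvMr X F.
by rewrite -[(X * F)%VS]/((X * F)%AS : {vspace Om}) XF1.
Qed.

Hypothesis t_L_neq1 : ~ ascending_index 1%AS L 1.

Lemma max_galois_sub_neq1 X : is_max_galois_sub 1%AS L X -> X != 1%AS.
Proof.
move=> maxX; apply/eqP => X1; apply: t_L_neq1; exists X.
by split=> //; rewrite X1 dimv1 divn1.
Qed.

Local Notation magF := (fun X : {subfield Om} => (X * F)%AS).

Lemma ascending_step_prodvF s i :
  {in s, forall X, (X <= L)%VS} -> (i < size s)%N ->
  ascending_step 1%AS L s i <-> ascending_step 1%AS (L * F)%AS (map magF s) i.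
Proof.
move=> sSL ltis; rewrite /ascending_step (nth_map 1%AS) //.
have sXL : (nth 1%AS s i <= L)%VS by apply/sSL/mem_nth.
case: i ltis sXL => [|j] ltis sXL /=.
  have mag := max_galois_sub_prodvF (sub1v L) (subvv _) (sub1v _) sXL.
  split=> -[maxX neq]; split; try by [apply/mag | apply/mag.2].
    by apply: contra neq => /eqP XF1; rewrite (prodvF_eq1 (esym XF1)).
  by rewrite eq_sym max_galois_sub_neq1 //; apply/mag.
have sBL : (nth 1%AS s j <= L)%VS by apply/sSL/mem_nth/ltnW.
rewrite (nth_map 1%AS) ?(ltnW ltis) //.
have mag := max_galois_sub_prodvF sBL (field_subvMr _ F) (subvv _) sXL.
split=> -[maxX neq]; split; try by [apply/mag | apply/mag.2].
  apply: contra neq => /eqP eqBX; apply/eqP.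
  exact: prodvF_inj (subv_trans sBL sLLt) (subv_trans sXL sLLt) eqBX.
by apply: contra neq => /eqP ->.
Qed.

Lemma ascending_last_prodvF s : {in s, forall X, (X <= L)%VS} ->
  is_max_galois_sub (last 1%AS s) L (last 1%AS s) <->
  is_max_galois_sub (last 1%AS (map magF s)) (L * F)%AS
    (last 1%AS (map magF s)).
Proof.
case: s => [|X s] sSL.
  split=> [max1 | max1]; first by move/max_galois_sub_neq1: max1; rewrite eqxx.
  have [X0 maxX0] := max_galois_sub_exists (sub1v L).
  have maxX0F := (max_galois_sub1_prodvF maxX0 _).2 erefl.
  have X0F1 := max_galois_sub_uniq maxX0F max1.
  by move/max_galois_sub_neq1: maxX0; rewrite (prodvF_eq1 X0F1) eqxx.
rewrite /= (last_map magF); have sXL : (last X s <= L)%VS by apply/sSL/mem_last.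
exact: (max_galois_sub_prodvF sXL (field_subvMr _ _) (subvv _) sXL).
Qed.

Lemma ascending_chain_prodvF s : {in s, forall X, (X <= L)%VS} ->
  ascending_chain 1%AS L s <-> ascending_chain 1%AS (L * F)%AS (map magF s).
Proof.
move=> sSL; rewrite /ascending_chain size_map.
have step := ascending_step_prodvF sSL; have lastE := ascending_last_prodvF sSL.
split=> -[steps lastS]; split=> [i ltis | ].
- by apply/(step i ltis); apply: steps.
- by apply/lastE.
- by apply/(step i ltis); apply: steps.
- by apply/lastE.
Qed.

End StrongMagnification.

Theorem theorem8p16 (K : fieldType) (Om : splittingFieldType K)
  (L F M : {subfield Om}) :
  perfect_field K ->
  strong_cluster_magnification L F M ->
  ~ ascending_index 1%AS L 1 ->
  (forall F1 : {subfield Om}, is_max_galois_sub 1%AS L F1 ->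
     forall F' : {subfield Om},
       is_max_galois_sub 1%AS M F' <-> F' = (F1 * F)%AS) /\
  (forall s : seq {subfield Om}, {in s, forall X : {subfield Om}, (X <= L)%VS} ->
     ascending_chain 1%AS L s <->
     ascending_chain 1%AS M (map (fun X : {subfield Om} => (X * F)%AS) s)).
Proof.
move=> _ [_ galF [Lt [[sLLt galLt _] [_ _ dimLtF]]] <-{M}] t_L_neq1.
rewrite dimv1 !divn1 in dimLtF.
split=> [F1 | s]; first exact: (max_galois_sub1_prodvF galLt galF dimLtF sLLt).
exact: (ascending_chain_prodvF galLt galF dimLtF sLLt t_L_neq1).
Qed.
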